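(* Let $\mathbb{Z}$ be a finite-dimensional Euclidean space, $L>0$, $G:\mathbb{Z}\to\mathbb{Z}$ $\frac1L$-co-coercive with a zero $z^*$ ($G(z^* )=0$). Let $\epsilon\in(0,1]$ and $\gamma_k:=\epsilon/\sqrt{k+1}$ for $k\ge0$. Let $\{z^k\}$ be generated from $z^0\in\mathbb{Z}$ by: for $k\ge 0$, choose $\tilde z^k$ with $\|G(z^k)-\tilde z^k\|\le\gamma_k$ and set $z^{k+1}=\beta_k z^0+(1-\beta_k)z^k-\eta_k\tilde z^k$ with $\beta_k=1/(k+2)$, $\eta_k=(1-\beta_k)/L$. Then $\|G(z^k)\|\le O(k^{-1})+O(\epsilon)$ and $\|z^{k+1}-z^k\|\le O(k^{-1})+O(\epsilon)$ for $k\ge0$; that is, there exist constants $C_1,C_2>0$ independent of $k$ and $\epsilon$ such that $\|G(z^k)\|\le C_1/(k+1)+C_2\epsilon$ and $\|z^{k+1}-z^k\|\le C_1/(k+1)+C_2\epsilon$ for all $k\ge0$.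
   Context: A map $G:\mathbb{Z}\to\mathbb{Z}$ is $c$-co-coercive if $\langle G(x_1)-G(x_2),x_1-x_2\rangle\ge c\|G(x_1)-G(x_2)\|^2$ for all $x_1,x_2$. *)

(* The finite-dimensional Euclidean space is modelled as
   'rV[R]_n over a real closed field R (R : rcfType, e.g. the reals),
   with the standard inner product. *)
From mathcomp Require Import all_boot all_order all_algebra.
Set Implicit Arguments. Unset Strict Implicit. Unset Printing Implicit Defensive.
Import Order.TTheory GRing.Theory Num.Theory.
Local Open Scope ring_scope.

Definition dotv (R : rcfType) (n : nat) (u v : 'rV[R]_n) : R :=
  \sum_(i < n) u 0 i * v 0 i.

Definition normv (R : rcfType) (n : nat) (u : 'rV[R]_n) : R :=
  Num.sqrt (dotv u u).

Definition cocoercive (R : rcfType) (n : nat) (c : R)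
  (G : 'rV[R]_n -> 'rV[R]_n) : Prop :=
  forall x1 x2, dotv (G x1 - G x2) (x1 - x2) >= c * (normv (G x1 - G x2)) ^+ 2.

(* Along the anchored iteration, with a = k + 1, the quantity
   Phi_a(z) = a <G z, z0 - z> - a (a - 2) / (2 L) |G z|^2 is a Lyapunov function:
   co-coercivity makes it nondecreasing along exact steps, and an inexact value
   zt costs at most a^2 / (2 L) |zt - G z|^2 <= a eps^2 / (2 L), so that
   Phi_(k+1)(z^k) >= - eps^2 k (k + 1) / (4 L). Co-coercivity at z* bounds
   Phi_a(z) from above by a |G z| D - a^2 |G z|^2 / (2 L) with D = |z0 - z*|, and
   the resulting quadratic inequality gives |G z^k| <= 2 L D / (k + 1) + eps.
   Since I - G / L is nonexpansive, |z^k - z*| <= D + k eps / L, which bounds the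
   step z^(k+1) - z^k = beta_k (z0 - z^k) - eta_k zt^k by 4 D / (k + 1) + 3 eps / L. *)
From mathcomp Require Import all_boot all_order all_algebra.
From mathcomp Require Import ring lra.
Import Order.TTheory GRing.Theory Num.Theory.
Set Implicit Arguments. Unset Strict Implicit. Unset Printing Implicit Defensive.
Local Open Scope ring_scope.

Ltac dotv_coordinatewise :=
  rewrite /dotv; do ! rewrite ?mulr_sumr ?mulr_suml -?sumrN -?big_split /=;
  apply: eq_bigr => i _; rewrite !mxE.

Section EuclideanRowVectors.
Variables (R : rcfType) (n : nat).
Implicit Types (u v w : 'rV[R]_n).

Lemma dotvC u v : dotv u v = dotv v u.
Proof. by apply: eq_bigr => i _; rewrite mulrC. Qed.

Lemma dotv0l v : dotv 0 v = 0.
Proof. by rewrite /dotv big1 // => i _; rewrite mxE mul0r. Qed.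

Lemma dotv_ge0 u : 0 <= dotv u u.
Proof. by apply: sumr_ge0 => i _; rewrite -expr2 sqr_ge0. Qed.

Lemma dotv_eq0 u : dotv u u = 0 -> u = 0.
Proof.
move=> uu0; apply/rowP => i; rewrite mxE.
have /eqP := psumr_eq0P (fun j _ => sqr_ge0 (u 0 j)) uu0 (i := i) isT.
by rewrite mulf_eq0 orbb => /eqP.
Qed.

Lemma normv_ge0 u : 0 <= normv u.
Proof. exact: sqrtr_ge0. Qed.

Lemma normv_gt0 u : u != 0 -> 0 < normv u.
Proof.
move=> u0; rewrite sqrtr_gt0 lt_def dotv_ge0 andbT.
by apply: contra_neq u0; apply: dotv_eq0.
Qed.

Lemma normv_sqr u : normv u ^+ 2 = dotv u u.
Proof. by rewrite sqr_sqrtr // dotv_ge0. Qed.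

Lemma ler_normv u v : dotv u u <= dotv v v -> normv u <= normv v.
Proof. by move=> uv; rewrite ler_sqrt // dotv_ge0. Qed.

Lemma normvZ (c : R) u : normv (c *: u) = `|c| * normv u.
Proof.
rewrite /normv -sqrtr_sqr -sqrtrM ?sqr_ge0 //; congr Num.sqrt.
by dotv_coordinatewise; ring.
Qed.

Lemma normvN u : normv (- u) = normv u.
Proof. by rewrite -scaleN1r normvZ normrN normr1 mul1r. Qed.

Lemma normvB u v : normv (u - v) = normv (v - u).
Proof. by rewrite -normvN opprB. Qed.

Lemma cauchy_schwarz u v : dotv u v <= normv u * normv v.
Proof.
have [->|u0] := eqVneq u 0; first by rewrite dotv0l mulr_ge0 ?normv_ge0.
have [->|v0] := eqVneq v 0; first by rewrite dotvC dotv0l mulr_ge0 ?normv_ge0.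
have a_gt0 := normv_gt0 u0; have b_gt0 := normv_gt0 v0.
set a := normv u in a_gt0 *; set b := normv v in b_gt0 *.
have := dotv_ge0 (b *: u - a *: v).
have -> : dotv (b *: u - a *: v) (b *: u - a *: v) =
    b ^+ 2 * dotv u u - 2 * a * b * dotv u v + a ^+ 2 * dotv v v.
  by dotv_coordinatewise; ring.
rewrite -!normv_sqr -/a -/b => h.
rewrite -(ler_pM2l (mulr_gt0 a_gt0 b_gt0)); nra.
Qed.

Lemma normvD_le u v : normv (u + v) <= normv u + normv v.
Proof.
rewrite -ler_sqr ?nnegrE ?addr_ge0 ?normv_ge0 // normv_sqr.
have -> : dotv (u + v) (u + v) = dotv u u + 2 * dotv u v + dotv v v.
  by dotv_coordinatewise; ring.
by rewrite -!normv_sqr; have := cauchy_schwarz u v; nra.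
Qed.

Lemma normvB_le u v w : normv (u - w) <= normv (u - v) + normv (v - w).
Proof. by have := normvD_le (u - v) (v - w); rewrite addrA subrK. Qed.

End EuclideanRowVectors.

Lemma le_of_quadratic_le (R : realFieldType) (a c e x : R) :
  0 < a -> 0 <= c -> 0 <= e -> a * x ^+ 2 - 2 * c * x <= a * e ^+ 2 ->
  x <= 2 * c / a + e.
Proof.
move=> a_gt0 c_ge0 e_ge0 quad.
rewrite -(ler_pM2l a_gt0) mulrDr mulrCA divff ?gt_eqF // mulr1.
rewrite leNgt; apply/negP => big.
have x_gt_e : e < x by rewrite -(ltr_pM2l a_gt0); lra.
have : 0 < x * (a * x - 2 * c - a * e) by rewrite mulr_gt0; lra.
have : 0 <= a * e * (x - e).
  by rewrite mulr_ge0 ?mulr_ge0 ?(ltW a_gt0) // subr_ge0 ltW.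
lra.
Qed.

Section InexactHalpernStep.
Variables (R : rcfType) (n : nat) (L : R) (G : 'rV[R]_n -> 'rV[R]_n).
Hypotheses (L_gt0 : 0 < L) (Gco : cocoercive L^-1 G).
Local Notation vec := 'rV[R]_n.

Let invL_ge0 : 0 <= L^-1. Proof. by rewrite invr_ge0 ltW. Qed.

Definition halpern_step (b : R) (z0 zk zt : vec) : vec :=
  b *: z0 + (1 - b) *: zk - ((1 - b) / L) *: zt.

Definition potential (a : R) (g w : vec) : R :=
  a * dotv g w - a * (a - 2) / (2 * L) * dotv g g.

Lemma potential_increment a (z0 zk zt g0 g1 : vec) : a + 1 != 0 -> L != 0 ->
  let z1 := halpern_step (a + 1)^-1 z0 zk zt in
  let w := (a + 1) *: g1 - (2 * a) *: g0 + a *: zt in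
  potential (a + 1) g1 (z0 - z1) - potential a g0 (z0 - zk) =
    a * (a + 1) * (dotv (g1 - g0) (z1 - zk) - L^-1 * dotv (g1 - g0) (g1 - g0))
    + (dotv w w - a ^+ 2 * dotv (zt - g0) (zt - g0)) / (2 * L).
Proof.
move=> a1_neq0 L_neq0 z1 w; rewrite /potential /z1 /w /halpern_step.
by dotv_coordinatewise; field; rewrite L_neq0 a1_neq0.
Qed.

Lemma potential_step a (z0 zk zt z1 : vec) :
  0 < a -> z1 = halpern_step (a + 1)^-1 z0 zk zt ->
  potential a (G zk) (z0 - zk) - a ^+ 2 / (2 * L) * normv (zt - G zk) ^+ 2
    <= potential (a + 1) (G z1) (z0 - z1).
Proof.
move=> a_gt0 z1_def.
have a1_neq0 : a + 1 != 0 by rewrite lt0r_neq0 // ltr_wpDr.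
have := potential_increment z0 zk zt (G zk) (G z1) a1_neq0 (lt0r_neq0 L_gt0).
rewrite /= -z1_def; set w := _ + _ *: zt => incr.
have coco : 0 <= dotv (G z1 - G zk) (z1 - zk) - L^-1 * dotv (G z1 - G zk) (G z1 - G zk).
  by rewrite subr_ge0 -normv_sqr; apply: Gco.
have w_ge0 : 0 <= dotv w w / (2 * L) by rewrite divr_ge0 ?dotv_ge0 // mulr_ge0 // ltW.
have : 0 <= a * (a + 1) * (dotv (G z1 - G zk) (z1 - zk) - L^-1 * dotv (G z1 - G zk) (G z1 - G zk)).
  by rewrite mulr_ge0 // mulr_ge0 // ltW // ltr_wpDr.
rewrite normv_sqr mulrBl mulrAC in incr *.
clearbody w; lra.
Qed.

Lemma potential_le a (zs z0 zk : vec) : G zs = 0 -> 0 <= a ->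
  potential a (G zk) (z0 - zk) <=
    a * normv (G zk) * normv (z0 - zs) - a ^+ 2 / (2 * L) * normv (G zk) ^+ 2.
Proof.
move=> Gzs a_ge0; have := Gco zk zs; rewrite Gzs subr0 normv_sqr => coco.
have split_dir : dotv (G zk) (z0 - zk) = dotv (G zk) (z0 - zs) - dotv (G zk) (zk - zs).
  by dotv_coordinatewise; ring.
have := ler_wpM2l a_ge0 (cauchy_schwarz (G zk) (z0 - zs)).
have := ler_wpM2l a_ge0 coco.
have coeffs : a * (a - 2) / (2 * L) * dotv (G zk) (G zk) + a * (L^-1 * dotv (G zk) (G zk))
    = a ^+ 2 / (2 * L) * dotv (G zk) (G zk).
  by field; rewrite lt0r_neq0.
rewrite /potential split_dir; lra.
Qed.

Lemma normv_forward_step_le (x y : vec) :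
  normv (x - L^-1 *: G x - (y - L^-1 *: G y)) <= normv (x - y).
Proof.
apply: ler_normv; have := Gco x y; rewrite normv_sqr => coco.
have -> : dotv (x - L^-1 *: G x - (y - L^-1 *: G y)) (x - L^-1 *: G x - (y - L^-1 *: G y))
    = dotv (x - y) (x - y) - 2 * L^-1 * dotv (G x - G y) (x - y)
      + L^-1 * L^-1 * dotv (G x - G y) (G x - G y).
  by dotv_coordinatewise; ring.
have := ler_wpM2l invL_ge0 coco.
have := dotv_ge0 (G x - G y).
nra.
Qed.

Lemma halpern_step_dist_le b (zs z0 zk zt : vec) : G zs = 0 -> 0 <= b <= 1 ->
  normv (halpern_step b z0 zk zt - zs) <=
    b * normv (z0 - zs) + (1 - b) * normv (zk - zs) + (1 - b) / L * normv (G zk - zt).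
Proof.
move=> Gzs /andP[b_ge0 b_le1]; have b'_ge0 : 0 <= 1 - b by rewrite subr_ge0.
have eta_ge0 : 0 <= (1 - b) / L by rewrite mulr_ge0.
have -> : halpern_step b z0 zk zt - zs = b *: (z0 - zs)
    + ((1 - b) *: (zk - L^-1 *: G zk - (zs - L^-1 *: G zs)) + ((1 - b) / L) *: (G zk - zt)).
  by apply/rowP => i; rewrite Gzs !mxE; field; rewrite lt0r_neq0.
apply: le_trans (normvD_le _ _) _; rewrite normvZ ger0_norm // -[leRHS]addrA lerD2l.
apply: le_trans (normvD_le _ _) _; rewrite !normvZ !ger0_norm // lerD2r.
by apply: ler_wpM2l => //; apply: normv_forward_step_le.
Qed.

Lemma halpern_step_move_le b (z0 zk zt : vec) : 0 <= b <= 1 ->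
  normv (halpern_step b z0 zk zt - zk) <= b * normv (z0 - zk) + (1 - b) / L * normv zt.
Proof.
move=> /andP[b_ge0 b_le1]; have eta_ge0 : 0 <= (1 - b) / L by rewrite mulr_ge0 ?subr_ge0.
have -> : halpern_step b z0 zk zt - zk = b *: (z0 - zk) + - (((1 - b) / L) *: zt).
  by apply/rowP => i; rewrite !mxE; ring.
by apply: le_trans (normvD_le _ _) _; rewrite normvN !normvZ !ger0_norm.
Qed.
End InexactHalpernStep.

Section InexactHalpernIterates.
Variables (R : rcfType) (n : nat) (L : R) (G : 'rV[R]_n -> 'rV[R]_n).
Hypotheses (L_gt0 : 0 < L) (Gco : cocoercive L^-1 G).
Variables (zs z0 : 'rV[R]_n) (eps : R) (z zt : nat -> 'rV[R]_n).
Hypotheses (Gzs : G zs = 0) (eps_ge0 : 0 <= eps) (z_0 : z 0%N = z0).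
Hypothesis zt_err : forall k, normv (G (z k) - zt k) <= eps / Num.sqrt k.+1%:R.
Hypothesis z_S : forall k, z k.+1 = halpern_step L k.+2%:R^-1 z0 (z k) (zt k).

Local Notation D := (normv (z0 - zs)).

Lemma zt_err_le k : normv (G (z k) - zt k) <= eps.
Proof.
apply: le_trans (zt_err k) _.
have sqrt_ge1 : 1 <= Num.sqrt (k.+1%:R : R) by rewrite -{1}sqrtr1 ler_sqrt // ler1n.
by rewrite ler_pdivrMr ?ler_peMr // (lt_le_trans ltr01).
Qed.

Lemma zt_err_sqr_le k : normv (zt k - G (z k)) ^+ 2 <= eps ^+ 2 / k.+1%:R.
Proof.
rewrite -[k.+1%:R in leRHS](sqr_sqrtr (ler0n R k.+1)) -expr_div_n normvB.
by rewrite ler_sqr ?nnegrE ?normv_ge0 ?divr_ge0 ?sqrtr_ge0.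
Qed.

Lemma potential_iterate_ge k :
  - (eps ^+ 2 * k%:R * k.+1%:R / (4 * L)) <= potential L k.+1%:R (G (z k)) (z0 - z k).
Proof.
elim: k => [|k IHk].
  rewrite z_0 subrr mulr0 !mul0r oppr0 /potential dotvC dotv0l.
  have : 0 <= (2 * L)^-1 * dotv (G z0) (G z0) by rewrite mulr_ge0 ?dotv_ge0 // invr_ge0 mulr_ge0 // ltW.
  lra.
have a_gt0 : 0 < k.+1%:R :> R by rewrite ltr0Sn.
have := potential_step L_gt0 Gco a_gt0; rewrite natr1 => /(_ _ _ _ _ (z_S k)) step.
have coef_ge0 : 0 <= k.+1%:R ^+ 2 / (2 * L) :> R by rewrite divr_ge0 ?mulr_ge0 // ltW.
have err := ler_wpM2l coef_ge0 (zt_err_sqr_le k).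
have sum_err : eps ^+ 2 * k%:R * k.+1%:R / (4 * L) + k.+1%:R ^+ 2 / (2 * L) * (eps ^+ 2 / k.+1%:R)
    = eps ^+ 2 * k.+1%:R * k.+2%:R / (4 * L).
  by rewrite -(natr1 k.+1) -(natr1 k); field; rewrite lt0r_neq0 // natr1 lt0r_neq0.
set err_bound := _ * (eps ^+ 2 / _) in err sum_err.
lra.
Qed.

Lemma residual_iterate_le k : normv (G (z k)) <= 2 * (L * D) / k.+1%:R + eps.
Proof.
have a_gt0 : 0 < k.+1%:R :> R by rewrite ltr0Sn.
apply: le_of_quadratic_le; rewrite ?mulr_ge0 ?normv_ge0 ?(ltW L_gt0) //.
have := le_trans (potential_iterate_ge k) (potential_le L_gt0 Gco z0 (z k) Gzs (ltW a_gt0)).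
have k_le : k%:R <= 2 * k.+1%:R :> R by rewrite -natr1; have := ler0n R k; lra.
move: a_gt0 k_le; set a := k.+1%:R; set x := normv (G (z k)); clearbody a => a_gt0 k_le pot.
have scale_ge0 : 0 <= 2 * L / a by rewrite divr_ge0 ?mulr_ge0 ?ltW.
have := ler_wpM2l scale_ge0 pot.
have -> : 2 * L / a * (a * x * D - a ^+ 2 / (2 * L) * x ^+ 2) = - (a * x ^+ 2 - 2 * (L * D) * x).
  by field; rewrite !lt0r_neq0.
have -> : 2 * L / a * - (eps ^+ 2 * k%:R * a / (4 * L)) = - (eps ^+ 2 * k%:R / 2).
  by field; rewrite !lt0r_neq0.
have := sqr_ge0 eps.
nra.
Qed.

Lemma dist_iterate_le k : normv (z k - zs) <= D + eps * k%:R / L.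
Proof.
elim: k => [|k IHk]; first by rewrite z_0 mulr0 mul0r addr0.
have b_ge0 : 0 <= k.+2%:R^-1 :> R by rewrite invr_ge0.
have b_le1 : k.+2%:R^-1 <= 1 :> R by rewrite invf_le1 ?ltr0Sn // ler1n.
have := halpern_step_dist_le L_gt0 Gco z0 (z k) (zt k) Gzs (introT andP (conj b_ge0 b_le1)).
rewrite -z_S -(natr1 k); set b := k.+2%:R^-1 in b_ge0 b_le1 * => step.
have b'_ge0 : 0 <= 1 - b by rewrite subr_ge0.
have := ler_wpM2l b'_ge0 IHk.
have := ler_wpM2l (divr_ge0 b'_ge0 (ltW L_gt0)) (zt_err_le k).
have : 0 <= b * (eps * k%:R / L) by rewrite !mulr_ge0 ?invr_ge0 ?(ltW L_gt0).
have : 0 <= b / L * eps by rewrite !mulr_ge0 ?invr_ge0 ?(ltW L_gt0).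
lra.
Qed.

Lemma step_iterate_le k : normv (z k.+1 - z k) <= 4 * D / k.+1%:R + 3 / L * eps.
Proof.
have b_ge0 : 0 <= k.+2%:R^-1 :> R by rewrite invr_ge0.
have b_le1 : k.+2%:R^-1 <= 1 :> R by rewrite invf_le1 ?ltr0Sn // ler1n.
have := halpern_step_move_le L_gt0 z0 (z k) (zt k) (introT andP (conj b_ge0 b_le1)).
rewrite -z_S => move_le.
have b_le : k.+2%:R^-1 <= k.+1%:R^-1 :> R by rewrite lef_pV2 ?posrE ?ltr0Sn // ler_nat.
have bk_le1 : k.+2%:R^-1 * k%:R <= 1 :> R.
  by rewrite mulrC ler_pdivrMr ?ltr0Sn // mul1r ler_nat leqW.
have anchor_le : normv (z0 - z k) <= 2 * D + eps * k%:R / L.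
  by rewrite (le_trans (normvB_le _ zs _)) // (normvB zs); have := dist_iterate_le k; lra.
have := residual_iterate_le k; have := zt_err_le k.
have := normvB_le (zt k) (G (z k)) 0; rewrite !subr0 normvB.
move: anchor_le move_le b_le bk_le1 b_ge0 b_le1.
set a := k.+1%:R^-1; set b := k.+2%:R^-1; set K := k%:R; clearbody a b K.
move=> anchor_le move_le b_le bk_le1 b_ge0 b_le1 zt_tri err_le res_le.
have D2_ge0 : 0 <= 2 * D by rewrite mulr_ge0 ?normv_ge0.
have epsL_ge0 : 0 <= eps / L by rewrite divr_ge0 ?(ltW L_gt0).
have := ler_wpM2l b_ge0 anchor_le.
have := ler_wpM2l D2_ge0 b_le; have := ler_wpM2l epsL_ge0 bk_le1.
have zt_le : normv (zt k) <= 2 * (L * D) * a + 2 * eps by lra.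
have eta_ge0 : 0 <= (1 - b) / L by rewrite divr_ge0 ?subr_ge0 ?(ltW L_gt0).
have := ler_wpM2l eta_ge0 zt_le.
have a_ge0 : 0 <= a := le_trans b_ge0 b_le.
have : 0 <= b / L * (2 * (L * D) * a + 2 * eps).
  by rewrite mulr_ge0 ?divr_ge0 ?addr_ge0 ?mulr_ge0 ?normv_ge0 ?(ltW L_gt0).
have -> : (1 - b) / L * (2 * (L * D) * a + 2 * eps)
    = 2 * D * a + 2 * eps / L - b / L * (2 * (L * D) * a + 2 * eps).
  by field; rewrite lt0r_neq0.
lra.
Qed.

End InexactHalpernIterates.

Theorem corollary2 (R : rcfType) (n : nat) (L : R) (G : 'rV[R]_n -> 'rV[R]_n)
    (zstar z0 : 'rV[R]_n) :
  0 < L -> cocoercive L^-1 G -> G zstar = 0 ->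
  exists C1 C2 : R, 0 < C1 /\ 0 < C2 /\
    forall (eps : R) (z zt : nat -> 'rV[R]_n),
      0 < eps -> eps <= 1 ->
      z 0%N = z0 ->
      (forall k : nat, normv (G (z k) - zt k) <= eps / Num.sqrt (k.+1)%:R) ->
      (forall k : nat,
         let beta : R := (k.+2)%:R^-1 in
         let eta : R := (1 - beta) / L in
         z k.+1 = beta *: z0 + (1 - beta) *: z k - eta *: zt k) ->
      forall k : nat,
        normv (G (z k)) <= C1 / (k.+1)%:R + C2 * eps /\
        normv (z k.+1 - z k) <= C1 / (k.+1)%:R + C2 * eps.
Proof.
move=> L_gt0 Gco Gzs; set D := normv (z0 - zstar).
have D_ge0 : 0 <= D := normv_ge0 _.
have LD_ge0 : 0 <= L * D := mulr_ge0 (ltW L_gt0) D_ge0.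
have L3_gt0 : 0 < 3 / L by rewrite divr_gt0.
exists (2 * (L * D) + 4 * D + 1), (1 + 3 / L).
do 2 (split; first lra).
move=> eps z zt eps_gt0 _ z_0 zt_err z_S k.
have eps_ge0 := ltW eps_gt0.
have weaken p q x : x <= p / k.+1%:R + q * eps ->
    p <= 2 * (L * D) + 4 * D + 1 -> q <= 1 + 3 / L ->
    x <= (2 * (L * D) + 4 * D + 1) / k.+1%:R + (1 + 3 / L) * eps.
  move=> x_le p_le q_le; apply: le_trans x_le _.
  by rewrite lerD // ler_wpM2r // invr_ge0.
split.
- apply: (weaken (2 * (L * D)) 1); [|lra|lra].
  rewrite mul1r; exact (residual_iterate_le L_gt0 Gco Gzs eps_ge0 z_0 zt_err z_S k).
- apply: (weaken (4 * D) (3 / L)); [|lra|lra].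
  exact (step_iterate_le L_gt0 Gco Gzs eps_ge0 z_0 zt_err z_S k).
Qed.
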